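(* For the cycle $C_n$ on $n\ge 3$ vertices: $IDI(C_n)=2$ if $n\ge 6$, and $IDI(C_3)=IDI(C_4)=IDI(C_5)=3$.
   Context: For a finite simple connected graph $G=(V,E)$ with diameter $d$, a rank assignment is a function $f:V\to\mathbb{R}$; under $f$, the string of a vertex $v$ is the $d$-vector whose $i$-th coordinate is the sum of $f(w)$ over all vertices $w$ with $d(v,w)=i$. The ID-index $IDI(G)$ is the minimum $k$ such that there exists $f:V\to\mathbb{R}$ with $|f(V)|=k$ under which all vertices have distinct strings. *)

From HB Require Import structures.
From mathcomp Require Import all_boot all_order all_algebra.
From mathcomp Require Import Rstruct.
Set Implicit Arguments. Unset Strict Implicit. Unset Printing Implicit Defensive.
Import Order.TTheory GRing.Theory Num.Theory.

Section GraphDefs.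
Variables (T : finType) (e : rel T).

Definition simple_graph : Prop := symmetric e /\ irreflexive e.

Fixpoint ball (k : nat) (v : T) : {set T} :=
  match k with
  | 0 => [set v]
  | k'.+1 => ball k' v :|: [set w | [exists u in ball k' v, e u w]]
  end.

Definition connected_graph : Prop := forall v w : T, w \in ball #|T| v.

(* graph distance: least k with w in ball k v (for connected graphs, < #|T|) *)
Definition dist (v w : T) : nat := find (fun k => w \in ball k v) (iota 0 #|T|).

Definition diameter : nat := \max_(v : T) \max_(w : T) dist v w.

Definition rstring (f : T -> Rdefinitions.R) (v : T) : seq Rdefinitions.R :=
  [seq (\sum_(w | dist v w == i) f w)%R | i <- iota 1 diameter].

Definition num_ranks (f : T -> Rdefinitions.R) : nat :=
  size (undup [seq f v | v <- enum T]).

Definition distinguishing (f : T -> Rdefinitions.R) : Prop := injective (rstring f).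

Definition is_IDI (k : nat) : Prop :=
  (exists f, distinguishing f /\ num_ranks f = k) /\
  (forall f, distinguishing f -> k <= num_ranks f).

End GraphDefs.

Definition cycle_rel (n : nat) : rel 'I_n :=
  fun i j => (val j == (val i).+1 %% n) || (val i == (val j).+1 %% n).
Arguments cycle_rel n : clear implicits.

From mathcomp Require Import all_boot all_order all_algebra zify.
From mathcomp Require Import Rstruct.
Set Implicit Arguments. Unset Strict Implicit. Unset Printing Implicit Defensive.
Import GRing.Theory Num.Theory.

(* A constant rank assignment gives every vertex the same
   string, because rotations of C_n preserve distances; hence IDI >= 2.  For
   n = 3, 4, 5 a two-valued assignment [if w \in A then b else a] gives v and u
   the same string as soon as A and its complement have the same number of
   vertices at each distance from v and from u, and a finite check shows that
   every A admits such a pair v <> u.  For n >= 6, give rank 1 to the vertices 0, 1, 3 and rank 0 to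
   the others.  The string of v then counts the marked vertices at each
   distance 1..D from v, and together with the number of marks this is the
   multiset of distances from v to 0, 1, 3; sorting this multiset and
   splitting according to the position of v shows that it determines v.  For
   n = 3, 4, 5 the ranks 0, ..., 0, 1, 2 work, again by a finite check. *)

Local Notation R := Rdefinitions.R.

Lemma perm_eq_pos_count (s t : seq nat) : size s = size t ->
  (forall i, 0 < i -> count_mem i s = count_mem i t) -> perm_eq s t.
Proof.
move=> size_st cnt.
have perm_pos : perm_eq (filter (predC1 0) s) (filter (predC1 0) t).
  apply/allP => -[|i] _ /=; rewrite !count_filter.
    by rewrite !(@eq_count _ _ pred0) ?count_pred0 // => x /=; rewrite andbN.
  by rewrite !(@eq_count _ _ (pred1 i.+1)) ?cnt // => x /=; case: eqP => // ->.
apply/allP => -[|i] _ /=; last by rewrite cnt.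
have := count_predC (pred1 0) s; have := count_predC (pred1 0) t.
by rewrite -!size_filter (perm_size perm_pos) size_st => <- /eqP; rewrite eqn_add2r.
Qed.

Lemma natr_inj : injective (fun i : nat => i%:R : R)%R.
Proof. by move=> i j /eqP; rewrite eqr_nat => /eqP. Qed.

Section Strings.
Variables (T : finType) (e : rel T).
Local Notation dist := (dist e).
Local Notation D := (diameter e).

Lemma dist_le_diameter v w : dist v w <= D.
Proof.
exact: leq_trans (leq_bigmax (F := dist v) w) (leq_bigmax (F := fun v => \max_w dist v w) v).
Qed.

Lemma eq_rstring f g : f =1 g -> rstring e f =1 rstring e g.
Proof. by move=> fg v; apply: eq_map => i; apply: eq_bigr => w _. Qed.

Definition nstring (g : T -> nat) (v : T) : seq nat :=
  [seq \sum_(w | dist v w == i) g w | i <- iota 1 D].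

Definition indicator (A : {set T}) (w : T) : nat := w \in A.

Lemma rstring_natr (g : T -> nat) v :
  rstring e (fun w => (g w)%:R : R)%R v = [seq i%:R%R | i <- nstring g v].
Proof. by rewrite -map_comp; apply: eq_map => i /=; rewrite natr_sum. Qed.

Lemma distinguishing_natr (g : T -> nat) :
  injective (nstring g) -> distinguishing e (fun w => (g w)%:R : R)%R.
Proof. by move=> inj_g v w; rewrite !rstring_natr => /(inj_map natr_inj)/inj_g. Qed.

Lemma num_ranks_natr (g : T -> nat) :
  num_ranks (fun w => (g w)%:R : R)%R = size (undup [seq g w | w <- enum T]).
Proof.
rewrite /num_ranks (map_comp (fun i => i%:R%R)) undup_map_inj ?size_map //.
exact: natr_inj.
Qed.

Lemma num_ranks_indicator (A : {set T}) a b : a \in A -> b \notin A ->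
  num_ranks (fun w => (indicator A w)%:R : R)%R = 2.
Proof.
move=> Aa Ab; rewrite num_ranks_natr.
rewrite (perm_size (uniq_perm (undup_uniq _) (isT : uniq [:: 1; 0]) _)) // => i.
rewrite mem_undup !inE; apply/mapP/idP => [[w _ ->]|].
  by rewrite /indicator; case: (w \in A).
by case/orP => /eqP ->; [exists a | exists b]; rewrite ?mem_enum /indicator ?Aa ?(negbTE Ab).
Qed.

Lemma num_ranks_le1 (f : T -> R) : num_ranks f <= 1 -> exists a, f =1 fun=> a.
Proof.
have ranks_f w : f w \in undup [seq f v | v <- enum T] by rewrite mem_undup map_f ?mem_enum.
rewrite /num_ranks; case: (undup _) ranks_f => [|a []] //= ranks_f _.
- by exists 0%R => w; have := ranks_f w.
- by exists a => w; have := ranks_f w; rewrite inE => /eqP.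
Qed.

Lemma num_ranks_le2 (f : T -> R) : num_ranks f <= 2 ->
  exists a b (A : {set T}), f =1 fun w => if w \in A then b else a.
Proof.
have ranks_f w : f w \in undup [seq f v | v <- enum T] by rewrite mem_undup map_f ?mem_enum.
rewrite /num_ranks; case: (undup _) ranks_f => [|a [|b []]] //= ranks_f _.
- by exists 0%R, 0%R, set0 => w; have := ranks_f w.
- by exists a, a, set0 => w; rewrite in_set0; have := ranks_f w; rewrite inE => /eqP.
exists a, b, [set w | f w == b] => w; rewrite inE.
by case: eqP => // /eqP ne; have := ranks_f w; rewrite !inE (negbTE ne) orbF => /eqP.
Qed.

Lemma rstring_two_valued (a b : R) (A : {set T}) v u :
  nstring (indicator A) v = nstring (indicator A) u ->
  nstring (indicator (~: A)) v = nstring (indicator (~: A)) u ->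
  rstring e (fun w => if w \in A then b else a) v =
  rstring e (fun w => if w \in A then b else a) u.
Proof.
have split_sum x i : (\sum_(w | dist x w == i) (if w \in A then b else a) =
    b *+ \sum_(w | dist x w == i) indicator A w +
    a *+ \sum_(w | dist x w == i) indicator (~: A) w)%R.
  rewrite -!sumrMnr -big_split; apply: eq_bigr => w _.
  by rewrite /indicator inE; case: (w \in A); rewrite /= ?mulr1n ?mulr0n ?addr0 ?add0r.
move=> /eq_in_map eqA /eq_in_map eqC; apply/eq_in_map => i iD.
by rewrite !split_sum eqA ?eqC.
Qed.

Lemma rstring_dist_preserving (s : T -> T) f v : bijective s ->
  (forall x y, dist (s x) (s y) = dist x y) -> rstring e (f \o s) v = rstring e f (s v).
Proof.
move=> bij_s dist_s; apply: eq_map => i.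
rewrite [RHS](reindex s) /=; last by apply: onW_bij.
by apply: eq_bigl => w; rewrite dist_s.
Qed.

Lemma num_ranks_gt1 (s : T -> T) v0 f : bijective s ->
  (forall x y, dist (s x) (s y) = dist x y) -> s v0 != v0 ->
  distinguishing e f -> 1 < num_ranks f.
Proof.
move=> bij_s dist_s moved inj_f; rewrite ltnNge; apply/negP => /num_ranks_le1[a fa].
have := rstring_dist_preserving (fun=> a) v0 bij_s dist_s.
by rewrite -!(eq_rstring fa) => /inj_f eq_v0; rewrite -eq_v0 eqxx in moved.
Qed.

(* The string only sees the distances 1..D; the number of marks at distance 0
   is then forced by #|S|. *)
Lemma nstring_indicator_perm (S : {set T}) v w :
  nstring (indicator S) v = nstring (indicator S) w ->
  perm_eq [seq dist v x | x <- enum S] [seq dist w x | x <- enum S].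
Proof.
have count_dists x i :
    count_mem i [seq dist x y | y <- enum S] = \sum_(y | dist x y == i) indicator S y.
  rewrite count_map -sum1_count big_enum_cond big_mkcond [RHS]big_mkcond.
  by apply: eq_bigr => y _; rewrite /indicator /=; case: (y \in S); case: (dist x y == i).
move=> /eq_in_map eq_vw; apply: perm_eq_pos_count => [|i i_gt0]; first by rewrite !size_map.
have [iD|Di] := leqP i D; first by rewrite !count_dists eq_vw // mem_iota i_gt0.
have out x : i \notin [seq dist x y | y <- enum S].
  by apply/mapP => -[y _ eq_i]; move: Di; rewrite eq_i ltnNge dist_le_diameter.
by rewrite !(count_memPn (out _)).
Qed.

End Strings.

(* [i - j + (j - i)] is |i - j| (truncated subtraction). *)
Definition cycle_dist n (i j : nat) : nat :=
  minn (i - j + (j - i)) (n - (i - j + (j - i))).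

Lemma val_ordS n (i : 'I_n) : ordS i = (if i.+1 == n then 0 else i.+1) :> nat.
Proof.
rewrite /=; case: eqP => [->|ne]; first exact: modnn.
by rewrite modn_small // ltn_neqAle ltn_ord andbT; apply/eqP.
Qed.

Lemma val_ord_pred n (i : 'I_n) : ord_pred i = (if i == 0 :> nat then n.-1 else i.-1) :> nat.
Proof.
have := ltn_ord i; rewrite /=; case: eqP => [->|ne] lt_in.
  by rewrite modn_small // prednK.
by rewrite -subn1 addnC -addnBA ?modnDl ?modn_small; lia.
Qed.

Lemma cycle_relE n (u w : 'I_n) : cycle_rel n u w = (w == ordS u) || (u == ordS w).
Proof. by []. Qed.

Lemma cycle_dist_adj n (v u w : 'I_n) :
  cycle_rel n u w -> cycle_dist n v w <= (cycle_dist n v u).+1.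
Proof.
have := ltn_ord v; have := ltn_ord u; have := ltn_ord w.
by rewrite cycle_relE /cycle_dist => ? ? ? /orP[] /eqP ->; rewrite val_ordS; case: eqP; lia.
Qed.

Lemma cycle_dist_step n (v w : 'I_n) : 0 < cycle_dist n v w ->
  (cycle_dist n v (ordS w)).+1 = cycle_dist n v w \/
  (cycle_dist n v (ord_pred w)).+1 = cycle_dist n v w.
Proof.
have := ltn_ord v; have := ltn_ord w; rewrite val_ordS val_ord_pred /cycle_dist => wn vn.
(* step towards v along the shorter arc *)
case: (ltngtP v w) => [vw|wv|->]; last by lia.
- by case: (leqP (w - v).*2 n) => h; [right|left]; case: eqP; lia.
- by case: (leqP (v - w).*2 n) => h; [left|right]; case: eqP; lia.
Qed.

Lemma ball_cycle n k (v w : 'I_n) :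
  (w \in ball (cycle_rel n) k v) = (cycle_dist n v w <= k).
Proof.
elim: k w => [|k IHk] w /=.
  rewrite in_set1; apply/eqP/idP => [->|]; first by rewrite /cycle_dist; lia.
  by have := ltn_ord v; have := ltn_ord w; rewrite /cycle_dist => ? ? ?; apply: ord_inj; lia.
rewrite in_setU inE IHk; apply/orP/idP => [[/leqW //|/existsP[u /andP[u_k uw]]]|].
  by move: u_k; rewrite IHk; have := cycle_dist_adj v uw; lia.
rewrite leq_eqVlt ltnS => /orP[/eqP dist_w|]; last by left.
right; apply/existsP; have [|ordS_w|ord_pred_w] := @cycle_dist_step n v w; first by lia.
- by exists (ordS w); rewrite IHk /cycle_rel eqxx orbT; lia.
- by exists (ord_pred w); rewrite IHk cycle_relE ord_predK eqxx; lia.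
Qed.

Lemma find_leq_iota c m : c < m -> find (leq c) (iota 0 m) = c.
Proof.
move=> lt_cm; have -> : m = c + (m - c).-1.+1 by lia.
rewrite iotaD find_cat size_iota /= add0n leqnn addn0.
by case: hasP => // -[k]; rewrite mem_iota; lia.
Qed.

Lemma dist_cycle n (v w : 'I_n) : dist (cycle_rel n) v w = cycle_dist n v w.
Proof.
rewrite /dist card_ord (eq_find (fun k => ball_cycle k v w)) find_leq_iota //.
by have := ltn_ord v; have := ltn_ord w; rewrite /cycle_dist; lia.
Qed.

Lemma dist_cycle_ordS n (v w : 'I_n) :
  dist (cycle_rel n) (ordS v) (ordS w) = dist (cycle_rel n) v w.
Proof.
have := ltn_ord v; have := ltn_ord w.
by rewrite !dist_cycle /cycle_dist !val_ordS; case: eqP; case: eqP; lia.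
Qed.

Lemma diameter_cycle n : 0 < n -> diameter (cycle_rel n) = n./2.
Proof.
move=> n_gt0; apply/eqP; rewrite eqn_leq; apply/andP; split.
  apply/bigmax_leqP => v _; apply/bigmax_leqP => w _.
  by have := ltn_ord v; have := ltn_ord w; rewrite dist_cycle /cycle_dist; lia.
have half_lt : n./2 < n by lia.
have := dist_le_diameter (cycle_rel n) (Ordinal n_gt0) (Ordinal half_lt).
by rewrite dist_cycle /cycle_dist /=; lia.
Qed.

Lemma num_ranks_cycle_gt1 n f : 1 < n -> distinguishing (cycle_rel n) f -> 1 < num_ranks f.
Proof.
move=> n1; apply: (num_ranks_gt1 (s := @ordS n) (v0 := Ordinal (ltnW n1))).
- exact: ordS_bij.
- exact: dist_cycle_ordS.
- by apply/eqP => /(congr1 (@nat_of_ord n)); rewrite val_ordS /=; case: eqP; lia.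
Qed.

(* The sorted multiset of distances from v to the vertices 0, 1, 3 of C_n. *)
Definition marks_profile n v : seq nat :=
  if v == 0 then [:: 0; 1; 3] else
  if v == 1 then [:: 0; 1; 2] else
  if v == 2 then [:: 1; 1; 2] else
  if v == 3 then [:: 0; 2; 3] else
  if v.*2 <= n then [:: v - 3; v - 1; v] else
  if v.*2 == n.+1 then [:: v - 3; v - 1; v - 1] else
  if v.*2 == n.+2 then [:: v - 3; v - 2; v - 1] else
  if v.*2 == n + 3 then [:: n - v; n - v; (n - v).+1] else
  if v.*2 == n + 4 then [:: n - v; (n - v).+1; (n - v).+1] else
  if v.*2 == n + 5 then [:: n - v; (n - v).+1; (n - v).+2] else
  [:: n - v; (n - v).+1; n - v + 3].

Lemma sorted_marks_profile n v : sorted leq (marks_profile n v).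
Proof. by rewrite /marks_profile; do ![case: ifP => _]; rewrite /= ?andbT; lia. Qed.

Lemma marks_profile_inj n v w : 6 <= n -> v < n -> w < n ->
  marks_profile n v = marks_profile n w -> v = w.
Proof.
move=> n6 vn wn; rewrite /marks_profile.
by do ![case: ifP => ?]; move=> /eqP; rewrite ?eqseq_cons ?andbT; lia.
Qed.

Lemma perm_marks_profile n v : 6 <= n -> v < n ->
  perm_eq [:: cycle_dist n v 0; cycle_dist n v 1; cycle_dist n v 3] (marks_profile n v).
Proof.
move=> n6 vn; rewrite /marks_profile.
have dists x y z : cycle_dist n v 0 = x -> cycle_dist n v 1 = y -> cycle_dist n v 3 = z ->
  [:: cycle_dist n v 0; cycle_dist n v 1; cycle_dist n v 3] = [:: x; y; z] by move=> -> -> ->.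
do ![case: ifP => ?]; [
  rewrite (dists 0 1 3) | rewrite (dists 1 0 2) |
  rewrite (dists 2 1 1) | rewrite (dists 3 2 0) |
  rewrite (dists v (v - 1) (v - 3)) |
  rewrite (dists (v - 1) (v - 1) (v - 3)) |
  rewrite (dists (v - 2) (v - 1) (v - 3)) |
  rewrite (dists (n - v) (n - v).+1 (n - v)) |
  rewrite (dists (n - v) (n - v).+1 (n - v).+1) |
  rewrite (dists (n - v) (n - v).+1 (n - v).+2) |
  rewrite (dists (n - v) (n - v).+1 (n - v + 3)) ];
  try by rewrite /cycle_dist; lia.
all: by apply/permP => P /=; lia.
Qed.

Definition marks n : {set 'I_n} := [set w : 'I_n | val w \in [:: 0; 1; 3]].

Lemma perm_dists_marks n (v : 'I_n) : 3 < n ->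
  perm_eq [seq dist (cycle_rel n) v x | x <- enum (marks n)]
          [:: cycle_dist n v 0; cycle_dist n v 1; cycle_dist n v 3].
Proof.
move=> n3; rewrite (eq_map (dist_cycle v)) (map_comp (cycle_dist n v) val).
apply: (perm_map (cycle_dist n v) (t := [:: 0; 1; 3])).
apply: uniq_perm; [by rewrite (map_inj_uniq val_inj) enum_uniq | by [] | move=> k].
apply/mapP/idP => [[w] | k013]; first by rewrite mem_enum inE => ? ->.
have k_lt : k < n by move: k013; rewrite !inE => /or3P[] /eqP ->; lia.
by exists (Ordinal k_lt); rewrite // mem_enum inE.
Qed.

Lemma nstring_marks_inj n : 6 <= n -> injective (nstring (cycle_rel n) (indicator (marks n))).
Proof.
move=> n6 v w /nstring_indicator_perm; have n3 : 3 < n by lia.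
rewrite (permPl (perm_dists_marks v n3)) (permPr (perm_dists_marks w n3)).
rewrite (permPl (perm_marks_profile n6 (ltn_ord v))).
rewrite (permPr (perm_marks_profile n6 (ltn_ord w))).
move/(sorted_eq leq_trans anti_leq (sorted_marks_profile _ _) (sorted_marks_profile _ _)).
by move/(marks_profile_inj n6 (ltn_ord v) (ltn_ord w))/ord_inj.
Qed.

Lemma IDI_cycle_ge6 n : 6 <= n -> is_IDI (cycle_rel n) 2.
Proof.
move=> n6; split; last by move=> f; apply: num_ranks_cycle_gt1; lia.
exists (fun w => (indicator (marks n) w)%:R%R); split.
  exact: distinguishing_natr (nstring_marks_inj n6).
have lt0 : 0 < n by lia. have lt2 : 2 < n by lia.
by apply: (num_ranks_indicator (a := Ordinal lt0) (b := Ordinal lt2)); rewrite inE.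
Qed.

Definition cycle_nstring n (g : nat -> nat) (v : nat) : seq nat :=
  [seq sumn [seq g k | k <- iota 0 n & cycle_dist n v k == i] | i <- iota 1 n./2].

Lemma nstring_cycleE n (g : 'I_n -> nat) (g' : nat -> nat) (v : 'I_n) :
  (forall w, g w = g' w) -> nstring (cycle_rel n) g v = cycle_nstring n g' v.
Proof.
move=> gg'; rewrite /nstring diameter_cycle ?(leq_ltn_trans _ (ltn_ord v)) //.
apply: eq_map => i; rewrite sumnE big_map big_filter.
rewrite (_ : iota 0 n = index_iota 0 n) ?big_mkord; last by rewrite /index_iota subn0.
by apply: eq_big => [w|w _]; rewrite ?dist_cycle ?gg'.
Qed.

Definition staircase n (k : nat) : nat := k - (n - 3).

Fixpoint bitseqs n : seq bitseq :=
  if n is n'.+1 then [seq b :: s | b <- [:: true; false], s <- bitseqs n'] else [:: [::]].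

Lemma mem_bitseqs (s : bitseq) : s \in bitseqs (size s).
Proof.
elim: s => [|b s IHs] //=; rewrite cats0 mem_cat.
by case: b; rewrite (map_f (cons _) IHs) ?orbT.
Qed.

Lemma staircase_small_cycles : all (fun n =>
    uniq [seq cycle_nstring n (staircase n) v | v <- iota 0 n] &&
    (size (undup [seq staircase n v | v <- iota 0 n]) == 3)) [:: 3; 4; 5].
Proof. by []. Qed.

(* A set of vertices of C_n is given by its list S of membership bits. *)
Lemma two_valued_collision_small_cycles : all (fun n =>
    all (fun S => ~~ uniq [seq (cycle_nstring n (fun k => nth false S k) v,
                                cycle_nstring n (fun k => ~~ nth false S k) v)
                          | v <- iota 0 n])
        (bitseqs n)) [:: 3; 4; 5].
Proof. by []. Qed.

Lemma distinguishing_staircase n : n \in [:: 3; 4; 5] ->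
  distinguishing (cycle_rel n) (fun w : 'I_n => (staircase n w)%:R : R)%R.
Proof.
move=> n345; have /allP/(_ n n345)/andP[uniq_str _] := staircase_small_cycles.
apply: distinguishing_natr => v w; rewrite !(nstring_cycleE (g' := staircase n)) //.
move/uniqP: uniq_str => /(_ [::] v w); rewrite !inE size_map size_iota !ltn_ord.
rewrite !(nth_map 0) ?size_iota ?ltn_ord // !nth_iota ?ltn_ord // !add0n.
by move=> inj /(inj isT isT) /ord_inj.
Qed.

Lemma num_ranks_staircase n : n \in [:: 3; 4; 5] ->
  num_ranks (fun w : 'I_n => (staircase n w)%:R : R)%R = 3.
Proof.
move=> n345; have /allP/(_ n n345)/andP[_ /eqP ranks3] := staircase_small_cycles.
by rewrite num_ranks_natr (map_comp (staircase n) val) val_enum_ord.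
Qed.

Lemma num_ranks_small_cycle_gt2 n f : n \in [:: 3; 4; 5] ->
  distinguishing (cycle_rel n) f -> 2 < num_ranks f.
Proof.
move=> n345 inj_f; rewrite ltnNge; apply/negP => /num_ranks_le2[a [b [A fE]]].
pose S := [seq w \in A | w <- enum 'I_n]; pose inS k := nth false S k.
have SE (w : 'I_n) : inS w = (w \in A).
  by rewrite /inS (nth_map w) ?size_enum_ord // nth_ord_enum.
have S_in : S \in bitseqs n.
  by rewrite -[n in bitseqs n]size_enum_ord -(size_map (fun w => w \in A)) mem_bitseqs.
have /allP/(_ n n345)/allP/(_ S S_in) := two_valued_collision_small_cycles.
case/(uniqPn ([::], [::])) => v [u [lt_vu u_lt]].
rewrite size_map size_iota in u_lt; have v_lt := ltn_trans lt_vu u_lt.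
rewrite !(nth_map 0) ?size_iota // !nth_iota // !add0n => -[strA strC].
have eq_str : rstring (cycle_rel n) f (Ordinal v_lt) = rstring (cycle_rel n) f (Ordinal u_lt).
  rewrite !(eq_rstring _ fE); apply: rstring_two_valued.
    by rewrite !(nstring_cycleE (g' := inS)) // => w; rewrite SE.
  by rewrite !(nstring_cycleE (g' := fun k => ~~ inS k)) // => w; rewrite /indicator inE SE.
by move/(congr1 val): (inj_f _ _ eq_str) lt_vu => /= ->; rewrite ltnn.
Qed.

Lemma IDI_cycle_small n : n \in [:: 3; 4; 5] -> is_IDI (cycle_rel n) 3.
Proof.
move=> n345; split; last by move=> f; apply: num_ranks_small_cycle_gt2.
exists (fun w : 'I_n => (staircase n w)%:R%R).
by split; [apply: distinguishing_staircase | apply: num_ranks_staircase].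
Qed.

Theorem mainTheorem9 (n : nat) : 3 <= n ->
  is_IDI (cycle_rel n) (if 6 <= n then 2 else 3).
Proof.
move=> n3; case: (leqP 6 n) => [n6|n5]; first exact: IDI_cycle_ge6.
by apply: IDI_cycle_small; rewrite !inE; lia.
Qed.
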